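(* Under Assumptions A1–A3 (with constant $p$), the operator $T$ has a fixed point in $\mathcal H_p$ if and only if there exist $g_0,h\in\mathcal H_p$ such that $T^ng_0\to h$ in $L_p(\pi)$ as $n\to\infty$.
   Context: Standing setting: $\{X_t\}_{t\ge0}$ is a stationary Markov process on a separable completely metrizable space $\mathsf X$ with transition kernel $\Pi$ and stationary law $\pi$; $\{\eta_t\}$ iid with law $\nu$ on $\mathsf W$, independent of $\{X_t\}$; $\phi,g\ge0$ Borel on $\mathsf X\times\mathsf X\times\mathsf W$ with $\Phi_{t+1}=\phi(X_t,X_{t+1},\eta_{t+1})$, $G_{t+1}=g(X_t,X_{t+1},\eta_{t+1})$. $\mathcal H_p$ is the set of nonnegative functions in $L_p(\pi)$. Valuation operator $Vh(x)=\int h(y)[\int\phi(x,y,\eta)\nu(d\eta)]\Pi(x,dy)$; $\hat g(x)=\int\int\phi g\,d\nu\,\Pi(x,dy)$; $Th=Vh+\hat g$. A1: $\phi>0$ everywhere and $G_t>0$ with positive probability. A2: for all Borel $B$ with $\pi(B)>0$ and all $x$, $\Pi^n(x,B)>0$ for some $n$. A3: for some $p\ge1$, $\hat g\in\mathcal H_p$ and $V$ maps $L_p(\pi)$ into itself with some power $V^i$ compact. *)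

From HB Require Import structures.
From mathcomp Require Import all_boot all_order all_algebra.
From mathcomp Require Import all_classical all_reals all_analysis.
From mathcomp Require Import measurable_realfun.
Set Implicit Arguments. Unset Strict Implicit. Unset Printing Implicit Defensive.
Import Order.TTheory GRing.Theory Num.Theory.
Local Open Scope classical_set_scope.
Local Open Scope ring_scope.
Local Open Scope ereal_scope.

Notation Borel X := (g_sigma_algebraType (@open X)).

(* Polish: X (given with a complete metric) is Hausdorff (so the pseudometric
   is a metric) and separable (has a countable dense subset). *)
Definition separable_space (T : topologicalType) : Prop :=
  exists S : set T, countable S /\ dense S.

Fixpoint kpow {R : realType} {d} {X : measurableType d}
    (Pi : R.-pker X ~> X) (n : nat) (x : X) (B : set X) : \bar R :=
  match n with
  | 0%N => (\1_B x)%:E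
  | n'.+1 => \int[Pi x]_y kpow Pi n' y B
  end.

Definition phibar {R : realType} {d dW} {X : measurableType d}
    {W : measurableType dW} (nu : probability W R) (phi : X * X * W -> R)
    (x y : X) : \bar R :=
  \int[nu]_w (phi (x, y, w))%:E.

Definition Vop {R : realType} {d dW} {X : measurableType d}
    {W : measurableType dW} (Pi : R.-pker X ~> X) (nu : probability W R)
    (phi : X * X * W -> R) (h : X -> \bar R) (x : X) : \bar R :=
  \int[Pi x]_y (h y * phibar nu phi x y).

Definition ghat {R : realType} {d dW} {X : measurableType d}
    {W : measurableType dW} (Pi : R.-pker X ~> X) (nu : probability W R)
    (phi g : X * X * W -> R) (x : X) : \bar R :=
  \int[Pi x]_y \int[nu]_w (phi (x, y, w) * g (x, y, w))%:E.

Definition Top {R : realType} {d dW} {X : measurableType d}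
    {W : measurableType dW} (Pi : R.-pker X ~> X) (nu : probability W R)
    (phi g : X * X * W -> R) (h : X -> \bar R) (x : X) : \bar R :=
  Vop Pi nu phi h x + ghat Pi nu phi g x.

(* membership in L_p(pi) (functions are extended-real valued, measurable,
   with finite p-norm; hence finite pi-a.e.) *)
Definition inLp {R : realType} {d} {X : measurableType d}
    (pi : {measure set X -> \bar R}) (p : R) (f : X -> \bar R) : Prop :=
  measurable_fun setT f /\ 'N[pi]_(p%:E)[f] < +oo.

Definition inHp {R : realType} {d} {X : measurableType d}
    (pi : {measure set X -> \bar R}) (p : R) (f : X -> \bar R) : Prop :=
  inLp pi p f /\ forall x, 0 <= f x.

Definition maps_Lp_into_itself {R : realType} {d} {X : measurableType d}
    (pi : {measure set X -> \bar R}) (p : R) (Pi : R.-pker X ~> X)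
    (K : X -> X -> \bar R) : Prop :=
  forall h : X -> \bar R, inLp pi p h ->
    {ae pi, forall x, (Pi x).-integrable setT (fun y => h y * K x y)} /\
    inLp pi p (fun x => \int[Pi x]_y (h y * K x y)).

Definition compact_op {R : realType} {d} {X : measurableType d}
    (pi : {measure set X -> \bar R}) (p : R)
    (A : (X -> \bar R) -> (X -> \bar R)) : Prop :=
  forall f : nat -> X -> \bar R,
    (forall n, inLp pi p (f n)) ->
    (exists M : R, forall n, 'N[pi]_(p%:E)[f n] <= M%:E) ->
    exists (s : nat -> nat) (l : X -> \bar R),
      (forall n, (s n < s n.+1)%N) /\ inLp pi p l /\
      ('N[pi]_(p%:E)[(fun x => A (f (s n)) x - l x)] @[n --> \oo] --> 0).

From HB Require Import structures.
From mathcomp Require Import all_boot all_order all_algebra.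
From mathcomp Require Import all_classical all_reals all_analysis.
From mathcomp Require Import measurable_realfun.
Set Implicit Arguments. Unset Strict Implicit. Unset Printing Implicit Defensive.
Import Order.TTheory GRing.Theory Num.Theory.
Local Open Scope classical_set_scope.
Local Open Scope ring_scope.
Local Open Scope ereal_scope.

(* If [h] is a fixed point in H_p, take [g0 := h]: by stationarity of [pi] the
   iterates [T^n h] agree with [h] pi-a.e., so their L_p distances to [h] vanish.
   Conversely, [T] is monotone and, by monotone convergence inside [V], commutes
   with increasing limits, so the increasing iterates [T^n 0] converge to a fixed
   point [h*].  As [T^n 0 <= T^n g0] and the [T^n g0] converge in L_p, hence are
   eventually bounded there, [h*] lies in H_p by monotone convergence. *)

Section ereal_sequences.
Context {R : realType}.
Implicit Types (a : (\bar R)^nat) (l x y : \bar R).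

Lemma nondecreasing_cvge_le a l :
  nondecreasing_seq a -> a @ \oo --> l -> forall n, a n <= l.
Proof.
move=> nda al n; rewrite (cvg_unique _ al (ereal_nondecreasing_cvgn nda)) //.
by apply: ereal_sup_ubound; exists n.
Qed.

Lemma nondecreasing_cvgeMr a l c :
  (forall n, 0 <= a n) -> nondecreasing_seq a -> a @ \oo --> l -> 0 <= c ->
  (fun n => a n * c) @ \oo --> l * c.
Proof.
move=> a0 nda al c0.
have [lc|] := boolP (l *? c); first by apply: cvgeM => //; exact: cvg_cst.
rewrite mule_defE negbK => /orP[/andP[/eqP l0 _]|/andP[/eqP -> _]].
  have an0 n : a n = 0.
    by apply/le_anti; rewrite a0 -l0 (nondecreasing_cvge_le nda al).
  by rewrite l0 mul0e; under eq_fun do rewrite an0 mul0e; exact: cvg_cst.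
by rewrite mule0; under eq_fun do rewrite mule0; exact: cvg_cst.
Qed.

Lemma lee_poweR (r : R) x y : (0 <= r)%R -> 0 <= x -> x <= y -> x `^ r <= y `^ r.
Proof.
move=> r0 x0 xy; apply: gt0_ler_poweR => //.
  by rewrite in_itv /= x0 leey.
by rewrite in_itv /= (le_trans x0 xy) leey.
Qed.

(* If [L := limn (a `^ r)] were below [l `^ r], then [t := L `^ r^-1 < l], so
   some [a n > t], i.e. [a n `^ r > L]. *)
Lemma poweR_cvge_le_limn a l (r : R) :
  (0 < r)%R -> (forall n, 0 <= a n) -> nondecreasing_seq a -> a @ \oo --> l ->
  l `^ r <= limn (fun n => a n `^ r).
Proof.
move=> r0 a0 nda al; set b := fun n => a n `^ r.
have ndb : nondecreasing_seq b.
  by move=> m n mn; apply: lee_poweR => //; [exact: ltW | exact: nda].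
have bL := nondecreasing_cvge_le ndb (ereal_nondecreasing_is_cvgn ndb).
rewrite leNgt; apply/negP => Llt.
have L0 : 0 <= limn b by apply: le_trans (bL 0%N); exact: poweR_ge0.
have Lfin : limn b \is a fin_num.
  by rewrite ge0_fin_numE // (lt_le_trans Llt) // leey.
set s := fine (limn b); set t := (s `^ r^-1)%R.
have tr : (t `^ r = s)%R by rewrite /t -powRrM mulVf ?gt_eqF // powRr1 // fine_ge0.
have tl : t%:E < l.
  rewrite ltNge; apply/negP => lt.
  have := lee_poweR (ltW r0) (le_trans (a0 0%N) (nondecreasing_cvge_le nda al 0%N)) lt.
  by rewrite poweR_EFin tr /s fineK // leNgt Llt.
rewrite (cvg_unique _ al (ereal_nondecreasing_cvgn nda)) // in tl.
have [_ [n _ <-] tan] := ereal_sup_gt tl.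
have := bL n; rewrite leNgt => /negP; apply.
rewrite /b; move: tan (a0 n); case: (a n) => [z| |] // tz z0.
  rewrite poweR_EFin -(fineK Lfin) lte_fin -/s -tr.
  by apply: (gt0_ltr_powR r0); rewrite ?nnegrE ?powR_ge0 -?lee_fin // -lte_fin.
by rewrite poweRyr ?gt_eqF // -(fineK Lfin) ltry.
Qed.

Lemma poweRD_le (r : R) x y : (0 < r)%R -> 0 <= x -> 0 <= y ->
  (x + y) `^ r <= ((2:R) `^ r)%:E * (x `^ r + y `^ r).
Proof.
move=> r0 x0 y0; wlog xy : x y x0 y0 / x <= y.
  move=> H; have [xy|yx] := leP x y; first exact: H.
  by rewrite addeC [X in _ * X]addeC; apply: H => //; exact: ltW.
apply: (@le_trans _ _ ((2%:E * y) `^ r)).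
  apply: lee_poweR => //; [exact: ltW | exact: adde_ge0 |].
  by rewrite (mule_natl y 2) mule2n leeD2r.
rewrite poweRM // poweR_EFin; apply: lee_wpmul2l; first by rewrite lee_fin powR_ge0.
by rewrite leeDr // poweR_ge0.
Qed.

Lemma abse_poweR_le_split (r : R) x y : (0 < r)%R -> 0 <= y ->
  `|x| `^ r <= ((2:R) `^ r)%:E * (`|y| `^ r + `|x - y| `^ r).
Proof.
move=> r0 y0; apply: le_trans (poweRD_le r0 (abse_ge0 _) (abse_ge0 _)).
apply: lee_poweR; [exact: ltW | exact: abse_ge0 |].
move: y0; case: y => [z| |] // _.
  by rewrite -[X in `|X|](@subeK _ x z%:E) // addeC lee_abs_add.
by rewrite addeNy /= addye ?leey.
Qed.

Lemma cvge0_eventually_le1 a : (forall n, 0 <= a n) ->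
  a @ \oo --> 0 -> exists N, forall n, (N <= n)%N -> a n <= 1.
Proof.
move=> a0 /fine_cvgP[afin afine].
have /(filterI afin)[N _ HN] : \forall n \near \oo, (fine (a n) < 1)%R.
  by apply: cvgr_lt afine _ _; exact: ltr01.
exists N => n Nn; have [an lt1] := HN n Nn.
by rewrite -(fineK an) lee_fin ltW.
Qed.

End ereal_sequences.

Section Lp_facts.
Context {R : realType} {d} {X : measurableType d}.
Variables (mu : {measure set X -> \bar R}) (p : R).
Hypothesis p_gt0 : (0 < p)%R.

Lemma measurable_abse_poweR (f : X -> \bar R) :
  measurable_fun setT f -> measurable_fun setT (fun x => `|f x| `^ p).
Proof.
move=> mf; exact: measurableT_comp (measurable_poweR p)
  (measurableT_comp (@abse_measurable R setT) mf).
Qed.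

Lemma inLp_fin_num_ae (f : X -> \bar R) :
  inLp mu p f -> {ae mu, forall x, f x \is a fin_num}.
Proof.
move=> [mf fLp]; have fint : mu.-integrable setT (fun x => `|f x| `^ p).
  apply/integrableP; split; first exact: measurable_abse_poweR.
  under eq_integral do rewrite gee0_abs ?poweR_ge0 //.
  by rewrite -poweR_Lnorm ?gt_eqF //; exact: poweR_lty.
apply: filterS (integrable_ae measurableT fint) => x /(_ Logic.I) /=.
by case: (f x) => //; rewrite /abse poweRyr ?gt_eqF.
Qed.

Lemma Lnorm_ae_eq0 (f : X -> \bar R) :
  measurable_fun setT f -> {ae mu, forall x, f x = 0} -> 'N[mu]_(p%:E)[f] = 0.
Proof.
move=> mf f0; apply: (@poweR_eq0_eq0 _ _ p); first exact: Lnorm_ge0.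
rewrite poweR_Lnorm ?gt_eqF // (ae_eq_integral (cst 0)) ?integral0 //.
  exact: measurable_abse_poweR.
by apply: filterS f0 => x -> _; rewrite abse0 poweR0r ?gt_eqF.
Qed.

Lemma integral_abse_poweR_cvg_le (u : nat -> X -> \bar R) (l : X -> \bar R)
    (C : \bar R) :
  (forall n, measurable_fun setT (u n)) -> (forall n x, 0 <= u n x) ->
  (forall x, nondecreasing_seq (u ^~ x)) -> (forall x, u ^~ x @ \oo --> l x) ->
  (forall n, \int[mu]_x `|u n x| `^ p <= C) -> \int[mu]_x `|l x| `^ p <= C.
Proof.
move=> mu_ u0 ndu ul uC; set v := fun n x => `|u n x| `^ p.
have ndv x : nondecreasing_seq (v ^~ x).
  move=> m n mn; rewrite /v !gee0_abs //.
  by apply: lee_poweR => //; [exact: ltW | exact: ndu].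
have mv n : measurable_fun setT (v n) by exact: measurable_abse_poweR.
have v0 n x : setT x -> 0 <= v n x by move=> _; exact: poweR_ge0.
have vcvg := @cvg_monotone_convergence _ _ _ mu _ measurableT _ mv v0
  (fun x _ => ndv x).
apply: (@le_trans _ _ (\int[mu]_x limn (v ^~ x))).
  apply: ge0_le_integral => //.
  - by move=> x _; exact: poweR_ge0.
  - by apply: measurable_abse_poweR; apply: (emeasurable_fun_cvg u) => // x _.
  - apply: (emeasurable_fun_cvg v) => // x _.
    exact: ereal_nondecreasing_is_cvgn.
  move=> x _.
  have lx0 := le_trans (u0 0%N x) (nondecreasing_cvge_le (ndu x) (ul x) 0%N).
  rewrite gee0_abs // /v; under eq_fun do rewrite gee0_abs //.
  exact: poweR_cvge_le_limn.
rewrite -(cvg_lim _ vcvg) //; apply: lime_le; last exact: nearW.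
by apply/cvg_ex; eexists; exact: vcvg.
Qed.

Lemma integral_abse_poweR_le_split (w h : X -> \bar R) :
  measurable_fun setT w -> measurable_fun setT h -> (forall x, 0 <= h x) ->
  \int[mu]_x `|w x| `^ p <=
    ((2:R) `^ p)%:E * (\int[mu]_x `|h x| `^ p + \int[mu]_x `|w x - h x| `^ p).
Proof.
move=> mw mh h0; have mwh : measurable_fun setT (fun x => w x - h x).
  exact: emeasurable_funB.
have mpow (f : X -> \bar R) :
    measurable_fun setT f -> measurable_fun setT (fun x => `|f x| `^ p).
  exact: measurable_abse_poweR.
apply: (@le_trans _ _
    (\int[mu]_x (((2:R) `^ p)%:E * (`|h x| `^ p + `|w x - h x| `^ p)))).
  apply: ge0_le_integral => //.
  - by move=> x _; exact: poweR_ge0.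
  - exact: mpow.
  - by apply: emeasurable_funM => //; apply: emeasurable_funD; exact: mpow.
  by move=> x _; exact: abse_poweR_le_split.
rewrite ge0_integralZl //; last 2 first.
- by apply: emeasurable_funD; exact: mpow.
- by move=> x _; rewrite adde_ge0 // poweR_ge0.
rewrite ge0_integralD //.
- by move=> x _; exact: poweR_ge0.
- exact: mpow.
- by move=> x _; exact: poweR_ge0.
- exact: mpow.
Qed.

(* The [u n] are bounded in L_p by the tail of the convergent, hence eventually
   bounded, sequence [w n]. *)
Lemma inLp_dominated_cvge (u w : nat -> X -> \bar R) (l h : X -> \bar R) :
  (forall n, measurable_fun setT (u n)) -> (forall n x, 0 <= u n x) ->
  (forall x, nondecreasing_seq (u ^~ x)) -> (forall x, u ^~ x @ \oo --> l x) ->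
  (forall n, measurable_fun setT (w n)) -> (forall n x, u n x <= w n x) ->
  inHp mu p h -> 'N[mu]_(p%:E)[(fun x => w n x - h x)] @[n --> \oo] --> 0 ->
  inLp mu p l.
Proof.
move=> mu_ u0 ndu ul mw uw [[mh hLp] h0] wh.
have [N whN] := cvge0_eventually_le1 (fun n => Lnorm_ge0 _ _ _) wh.
set C := ((2:R) `^ p)%:E * (\int[mu]_x `|h x| `^ p + 1).
have uC n : \int[mu]_x `|u n x| `^ p <= C.
  have wh1 : \int[mu]_x `|w (n + N)%N x - h x| `^ p <= 1.
    rewrite -poweR_Lnorm ?gt_eqF // -(poweR1r p).
    by apply: lee_poweR; [exact: ltW | exact: Lnorm_ge0 | exact: whN (leq_addl _ _)].
  apply: (@le_trans _ _ (\int[mu]_x `|w (n + N)%N x| `^ p)).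
    apply: ge0_le_integral => //; try exact: measurable_abse_poweR.
    - by move=> x _; exact: poweR_ge0.
    move=> x _; apply: lee_poweR; [exact: ltW | exact: abse_ge0 |].
    rewrite !gee0_abs ?(le_trans (u0 _ x) (uw _ x)) //.
    exact: le_trans (ndu x _ _ (leq_addr N n)) (uw _ x).
  apply: le_trans (integral_abse_poweR_le_split (mw (n + N)%N) mh h0) _.
  by rewrite lee_wpmul2l ?lee_fin ?powR_ge0 // leeD2l.
split; first by apply: (emeasurable_fun_cvg u) => // x _.
apply: (@lty_poweRy _ _ p); first by rewrite gt_eqF.
rewrite poweR_Lnorm ?gt_eqF //.
apply: le_lt_trans (integral_abse_poweR_cvg_le mu_ u0 ndu ul uC) _.
rewrite lte_mul_pinfty // lte_add_pinfty // ?ltry //.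
by rewrite -poweR_Lnorm ?gt_eqF //; exact: poweR_lty.
Qed.

End Lp_facts.

Lemma stationary_kernel_null {R : realType} d (X : measurableType d)
    (Pi : R.-pker X ~> X) (pi : {measure set X -> \bar R}) :
  (forall B, measurable B -> \int[pi]_x Pi x B = pi B) ->
  forall N, measurable N -> pi N = 0 -> {ae pi, forall x, Pi x N = 0}.
Proof.
move=> stat N mN piN.
have mPiN : measurable_fun setT (fun x => Pi x N) by exact: measurable_kernel.
have : \int[pi]_x `|Pi x N| = 0.
  by rewrite -piN -stat //; apply: eq_integral => x _; rewrite gee0_abs.
by move/(ae_eq_integral_abs pi measurableT mPiN); apply: filterS => x; exact.
Qed.

Section valuation_operator.
Context {R : realType} {d dW} {X : measurableType d} {W : measurableType dW}.
Variables (Pi : R.-pker X ~> X) (nu : probability W R) (phi : X * X * W -> R).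
Hypotheses (mphi : measurable_fun setT phi) (phi_ge0 : forall z, (0 <= phi z)%R).
Local Notation V := (Vop Pi nu phi).

Lemma phibar_ge0 x y : 0 <= phibar nu phi x y.
Proof. by apply: integral_ge0 => w _; rewrite lee_fin. Qed.

Lemma measurable_phibar :
  measurable_fun setT (fun z : X * X => phibar nu phi z.1 z.2).
Proof.
have -> : (fun z : X * X => phibar nu phi z.1 z.2) =
    (fun z => \int[nu]_w (phi (z, w))%:E) by apply/funext => -[].
apply: (measurable_fun_fubini_tonelli_F (fun z => (phi z)%:E)).
  exact/measurable_EFinP.
by move=> z; rewrite lee_fin.
Qed.

Lemma measurable_Vop_integrand (f : X -> \bar R) x :
  measurable_fun setT f -> measurable_fun setT (fun y => f y * phibar nu phi x y).
Proof.
move=> mf; apply: emeasurable_funM => //.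
exact: (measurable_fun_pair2 (f := fun z : X * X => phibar nu phi z.1 z.2) x
  measurable_phibar).
Qed.

Lemma measurable_Vop (f : X -> \bar R) :
  measurable_fun setT f -> (forall x, 0 <= f x) -> measurable_fun setT (V f).
Proof.
move=> mf f0.
apply: (measurable_fun_integral_finite_kernel
  (fun z : X * X => f z.2 * phibar nu phi z.1 z.2) Pi).
  by move=> z; rewrite mule_ge0 // phibar_ge0.
by apply: emeasurable_funM; [exact: measurableT_comp | exact: measurable_phibar].
Qed.

Lemma Vop_ge0 (f : X -> \bar R) : (forall x, 0 <= f x) -> forall x, 0 <= V f x.
Proof. by move=> f0 x; apply: integral_ge0 => y _; rewrite mule_ge0 // phibar_ge0. Qed.

Lemma le_Vop (f1 f2 : X -> \bar R) :
  measurable_fun setT f1 -> measurable_fun setT f2 -> (forall x, 0 <= f1 x) ->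
  (forall x, f1 x <= f2 x) -> forall x, V f1 x <= V f2 x.
Proof.
move=> mf1 mf2 f10 f12 x; apply: ge0_le_integral => //.
- by move=> y _; rewrite mule_ge0 // phibar_ge0.
- exact: measurable_Vop_integrand.
- exact: measurable_Vop_integrand.
- by move=> y _; rewrite lee_wpmul2r // phibar_ge0.
Qed.

Lemma nondecreasing_cvg_Vop (u : nat -> X -> \bar R) (f : X -> \bar R) :
  (forall n, measurable_fun setT (u n)) -> (forall n x, 0 <= u n x) ->
  (forall x, nondecreasing_seq (u ^~ x)) -> (forall x, u ^~ x @ \oo --> f x) ->
  forall x, V (u n) x @[n --> \oo] --> V f x.
Proof.
move=> mu u0 ndu uf x.
have -> : V f x = \int[Pi x]_y limn (fun n => u n y * phibar nu phi x y).
  apply: eq_integral => y _; apply/esym/cvg_lim => //.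
  by apply: nondecreasing_cvgeMr => //; exact: phibar_ge0.
apply: cvg_monotone_convergence => //.
- by move=> n; exact: measurable_Vop_integrand.
- by move=> n y _; rewrite mule_ge0 // phibar_ge0.
- by move=> y _ m n mn; rewrite lee_wpmul2r ?phibar_ge0 ?ndu.
Qed.

Variable g : X * X * W -> R.
Hypotheses (mghat : measurable_fun setT (ghat Pi nu phi g))
  (ghat_ge0 : forall x, 0 <= ghat Pi nu phi g x).
Local Notation T := (Top Pi nu phi g).

Lemma Top_ge0 (f : X -> \bar R) : (forall x, 0 <= f x) -> forall x, 0 <= T f x.
Proof. by move=> f0 x; rewrite adde_ge0 // Vop_ge0. Qed.

Lemma measurable_Top (f : X -> \bar R) :
  measurable_fun setT f -> (forall x, 0 <= f x) -> measurable_fun setT (T f).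
Proof. by move=> mf f0; apply: emeasurable_funD => //; exact: measurable_Vop. Qed.

Lemma le_Top (f1 f2 : X -> \bar R) :
  measurable_fun setT f1 -> measurable_fun setT f2 -> (forall x, 0 <= f1 x) ->
  (forall x, f1 x <= f2 x) -> forall x, T f1 x <= T f2 x.
Proof. by move=> mf1 mf2 f10 f12 x; rewrite leeD2r // le_Vop. Qed.

Lemma iter_Top_ge0 (f : X -> \bar R) :
  (forall x, 0 <= f x) -> forall n x, 0 <= iter n T f x.
Proof. by move=> f0; elim=> //= n IH; exact: Top_ge0. Qed.

Lemma measurable_iter_Top (f : X -> \bar R) :
  measurable_fun setT f -> (forall x, 0 <= f x) ->
  forall n, measurable_fun setT (iter n T f).
Proof.
by move=> mf f0; elim=> //= n IH; apply: measurable_Top => //; exact: iter_Top_ge0.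
Qed.

Lemma le_iter_Top (f1 f2 : X -> \bar R) :
  measurable_fun setT f1 -> measurable_fun setT f2 -> (forall x, 0 <= f1 x) ->
  (forall x, f1 x <= f2 x) -> forall n x, iter n T f1 x <= iter n T f2 x.
Proof.
move=> mf1 mf2 f10 f12; elim=> //= n IH x.
have f20 y : 0 <= f2 y by exact: le_trans (f10 y) (f12 y).
by apply: le_Top => //; [exact: measurable_iter_Top | exact: measurable_iter_Top
  | exact: iter_Top_ge0].
Qed.

Definition Top_iter_sup (x : X) : \bar R :=
  ereal_sup (range (fun n => iter n T (cst 0) x)).

Lemma iter_Top0_ge0 n x : 0 <= iter n T (cst 0) x.
Proof. exact: iter_Top_ge0. Qed.

Lemma measurable_iter_Top0 n : measurable_fun setT (iter n T (cst 0)).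
Proof. exact: measurable_iter_Top. Qed.

Lemma nondecreasing_iter_Top0 x : nondecreasing_seq (fun n => iter n T (cst 0) x).
Proof.
apply/nondecreasing_seqP => n; elim: n x => [|n IH] x; first exact: iter_Top0_ge0.
by apply: le_Top IH x => //; [exact: measurable_iter_Top0 ..|exact: iter_Top0_ge0].
Qed.

Lemma cvg_iter_Top0 x : iter n T (cst 0) x @[n --> \oo] --> Top_iter_sup x.
Proof. exact/ereal_nondecreasing_cvgn/nondecreasing_iter_Top0. Qed.

Lemma Top_iter_sup_ge0 x : 0 <= Top_iter_sup x.
Proof. by apply: ereal_sup_ubound; exists 0%N. Qed.

Lemma Top_iter_supE x : T Top_iter_sup x = Top_iter_sup x.
Proof.
have Vcvg := nondecreasing_cvg_Vop measurable_iter_Top0 iter_Top0_ge0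
  nondecreasing_iter_Top0 cvg_iter_Top0 (x := x).
have TuT : iter n.+1 T (cst 0) x @[n --> \oo] --> T Top_iter_sup x.
  apply: cvgeD Vcvg (cvg_cst _); apply: ge0_adde_def; rewrite inE //.
  by apply: Vop_ge0; exact: Top_iter_sup_ge0.
apply: (cvg_unique _ TuT) => //=.
by rewrite (cvg_shiftS (fun n => iter n T (cst 0) x)); exact: cvg_iter_Top0.
Qed.

Variables (pi : {measure set X -> \bar R}) (p : R).
Hypotheses (stat : forall B, measurable B -> \int[pi]_x Pi x B = pi B)
  (p_gt0 : (0 < p)%R).

(* By stationarity, [Pi x] does not charge [pi]-null sets for [pi]-a.e. [x]. *)
Lemma Top_ae_eq (f1 f2 : X -> \bar R) :
  measurable_fun setT f1 -> measurable_fun setT f2 ->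
  {ae pi, forall x, f1 x = f2 x} -> {ae pi, forall x, T f1 x = T f2 x}.
Proof.
move=> mf1 mf2 [N [mN piN f12N]].
apply: filterS (stationary_kernel_null stat mN piN) => x PixN.
congr (_ + _); apply: ae_eq_integral => //; try exact: measurable_Vop_integrand.
exists N; split => // y /= yN; apply: f12N => /= f12y; apply: yN => _.
by rewrite f12y.
Qed.

Lemma Lnorm_iter_Top_fixpoint (h : X -> \bar R) :
  inHp pi p h -> {ae pi, forall x, T h x = h x} ->
  forall n, 'N[pi]_(p%:E)[(fun x => iter n T h x - h x)] = 0.
Proof.
move=> [[mh hLp] h0] Thh n; have miter := measurable_iter_Top mh h0.
have iter_ae : {ae pi, forall x, iter n T h x = h x}.
  elim: n => [|n IH]; first exact: aeW.
  by apply: filterS2 (Top_ae_eq (miter n) mh IH) Thh => x /= -> ->.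
apply: Lnorm_ae_eq0 => //; first exact: emeasurable_funB.
apply: filterS2 iter_ae (inLp_fin_num_ae p_gt0 (conj mh hLp)) => x -> hx.
by rewrite subee.
Qed.

Lemma Top_iter_sup_inHp (g0 h : X -> \bar R) :
  inHp pi p g0 -> inHp pi p h ->
  'N[pi]_(p%:E)[(fun x => iter n T g0 x - h x)] @[n --> \oo] --> 0 ->
  inHp pi p Top_iter_sup.
Proof.
move=> [[mg0 _] g00] hHp Tg0h; split; last exact: Top_iter_sup_ge0.
apply: (inLp_dominated_cvge p_gt0 measurable_iter_Top0 iter_Top0_ge0
  nondecreasing_iter_Top0 cvg_iter_Top0 (measurable_iter_Top mg0 g00) _ hHp Tg0h).
by move=> n x; apply: le_iter_Top => //; exact: measurable_iter_Top.
Qed.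

End valuation_operator.

Theorem mainTheorem12
  (R : realType)
  (* state space: separable completely metrizable, with its Borel sets *)
  (X : completePseudoMetricType R) (hX : hausdorff_space X)
  (sepX : separable_space X)
  (* shock space *)
  (dW : measure_display) (W : measurableType dW) (nu : probability W R)
  (* transition kernel and stationary law *)
  (Pi : R.-pker (Borel X) ~> (Borel X)) (pi : probability (Borel X) R)
  (stat : forall B : set (Borel X), measurable B ->
            \int[pi]_x Pi x B = pi B)
  (phi g : Borel X * Borel X * W -> R)
  (mphi : measurable_fun setT phi) (mg : measurable_fun setT g)
  (phi_ge0 : forall z, (0 <= phi z)%R) (g_ge0 : forall z, (0 <= g z)%R)
  (p : R) (p_ge1 : (1 <= p)%R)
  (* A1 *)
  (A1phi : forall z, (0 < phi z)%R)
  (A1g : 0 < \int[pi]_x \int[Pi x]_y \int[nu]_w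
                 (\1_[set z | (0 < g z)%R] (x, y, w))%:E)
  (* A2 *)
  (A2 : forall B : set (Borel X), measurable B -> 0 < pi B ->
          forall x, exists n : nat, 0 < kpow Pi n.+1 x B)
  (* A3 *)
  (A3g : inHp pi p (ghat Pi nu phi g))
  (A3V : maps_Lp_into_itself pi p Pi (phibar nu phi))
  (A3c : exists i : nat, (0 < i)%N /\ compact_op pi p (iter i (Vop Pi nu phi))) :
  (exists h, inHp pi p h /\ {ae pi, forall x, Top Pi nu phi g h x = h x})
  <->
  (exists g0 h, inHp pi p g0 /\ inHp pi p h /\
     ('N[pi]_(p%:E)[(fun x => iter n (Top Pi nu phi g) g0 x - h x)]
        @[n --> \oo] --> 0)).
Proof.
have [[mghat _] ghat_ge0] := A3g; have p_gt0 : (0 < p)%R := lt_le_trans ltr01 p_ge1.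
split=> [[h [hHp Thh]]|[g0 [h [g0Hp [hHp Tg0h]]]]].
  exists h, h; split=> //; split=> //.
  have := Lnorm_iter_Top_fixpoint mphi phi_ge0 mghat ghat_ge0 stat p_gt0 hHp Thh.
  by move=> /funext ->; exact: cvg_cst.
exists (Top_iter_sup Pi nu phi g); split.
  exact: (Top_iter_sup_inHp mphi phi_ge0 mghat ghat_ge0 p_gt0 g0Hp hHp Tg0h).
exact/aeW/(Top_iter_supE mphi phi_ge0 mghat ghat_ge0).
Qed.
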